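(* Let $d>0$, and for each integer $M>d$ let $\tilde{\mathcal D}_M$ be the scaled mean-field node-based function (with $p=d/M$) defined in the context. Then for every integer $N>d$ and all integers $N_1,N_2\ge N$, $$\sup_{(\alpha,\beta)\in[0,1)^2}\bigl|\tilde{\mathcal D}_{N_1}(\alpha,\beta)-\tilde{\mathcal D}_{N_2}(\alpha,\beta)\bigr|\le \frac{16d^2}{N}e^{8d}.$$
   Context: Mean-field node-based recursion: fix $M$ and $p\in(0,1]$. For $i,j\in\{1,\dots,M\}$ define $D_M(i,j)$ and $S_M(i,j)$ jointly by $S_M(i,j)=1-\sum_{k=1}^{j-1}D_M(i,k)$, $D_M(i,i)=0$, and $D_M(i,j)=p\,S_M(i,j)\,S_M(j,i)$ for $i\ne j$ (well defined by induction on $i+j$). For $\alpha\in[0,1)$ write $i_M(\alpha)=\lfloor M\alpha\rfloor+1$. The scaled function is $\tilde{\mathcal D}_M(\alpha,\beta)=M\,D_M(i_M(\alpha),i_M(\beta))$ if $\lfloor M\alpha\rfloor\neq\lfloor M\beta\rfloor$, and $\tilde{\mathcal D}_M(\alpha,\beta)=M p\,S_M(i_M(\alpha),i_M(\alpha))^2$ otherwise, with $p=d/M$. *)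

From Stdlib Require Import Reals ZArith Arith.
Open Scope R_scope.

Fixpoint sum_1_to (f : nat -> R) (n : nat) : R :=
  match n with
  | O => 0
  | S m => sum_1_to f m + f (S m)
  end.

(* Fuel-indexed version of the joint recursion
     S(i,j) = 1 - sum_{k=1}^{j-1} D(i,k),
     D(i,i) = 0,  D(i,j) = p S(i,j) S(j,i)  (i <> j).
   Each recursive call strictly decreases i+j, and all calls bottom out at
   D(k,k)=0 or empty sums, so fuel i+j is always sufficient. *)
Fixpoint D_fuel (fuel : nat) (p : R) (i j : nat) : R :=
  match fuel with
  | O => 0
  | S f =>
      if Nat.eqb i j then 0
      else p * (1 - sum_1_to (fun k => D_fuel f p i k) (j - 1))
             * (1 - sum_1_to (fun k => D_fuel f p j k) (i - 1))
  end.

(* D_M(i,j) with parameter p (D_M depends on M only through p). *)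
Definition Dnode (p : R) (i j : nat) : R := D_fuel (i + j) p i j.

Definition Snode (p : R) (i j : nat) : R :=
  1 - sum_1_to (fun k => Dnode p i k) (j - 1).

Definition floorZ (x : R) : Z := Int_part x.

Definition iM (M : nat) (alpha : R) : nat :=
  (Z.to_nat (floorZ (INR M * alpha)) + 1)%nat.

Definition Dscaled (d : R) (M : nat) (alpha beta : R) : R :=
  let p := d / INR M in
  if Z.eq_dec (floorZ (INR M * alpha)) (floorZ (INR M * beta))
  then INR M * p * (Snode p (iM M alpha) (iM M alpha)) ^ 2
  else INR M * Dnode p (iM M alpha) (iM M beta).

From Stdlib Require Import Reals ZArith Arith Lra Lia Psatz.
Open Scope R_scope.

(* Write p_i = d/N_i and L = N1*N2.  Both coarse grids {1..N1} and {1..N2}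
   are refined to the common fine grid {0..L-1}: the fine index u sits in the
   coarse cell u/q + 1, where q = L/M is the block length of the coarse grid of
   size M.  On the fine grid, sigma(u,v) = S_M(u/q+1, v/q+1) satisfies, up to
   an error of at most 2q fine terms,
       sigma(u,v) = 1 - (d/L) * sum_{w<v} sigma(u,w) sigma(w,u),
   an equation in which the grid size only survives through that error.
   Subtracting the equations of the two grids gives a discrete integral
   inequality for e(u,v) = |sigma_1(u,v) - sigma_2(u,v)|, and a discrete
   Gronwall lemma bounds e(u,v) by 2(d/L)(N1+N2) exp(2d(u+v)/L), which is at
   most (4d/N) e^{8d} for u, v <= L.  Finally \tilde D_M(alpha,beta) = d sigma(u,v) sigma(v,u) with
   u = floor(L alpha), v = floor(L beta), which yields the theorem. *)

Fixpoint sumN (f : nat -> R) (n : nat) : R :=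
  match n with O => 0 | S m => sumN f m + f m end.

Lemma sum_1_to_sumN f n : sum_1_to f n = sumN (fun k => f (S k)) n.
Proof. induction n as [|n IH]; simpl; [reflexivity | now rewrite IH]. Qed.

Lemma sum_1_to_ext f g n :
  (forall k, (1 <= k <= n)%nat -> f k = g k) -> sum_1_to f n = sum_1_to g n.
Proof.
  induction n as [|n IH]; intros H; simpl; [reflexivity|].
  rewrite IH by (intros; apply H; lia). rewrite H by lia; reflexivity.
Qed.

Lemma sumN_ext f g n :
  (forall k, (k < n)%nat -> f k = g k) -> sumN f n = sumN g n.
Proof.
  induction n as [|n IH]; intros H; simpl; [reflexivity|].
  rewrite IH by (intros; apply H; lia). rewrite H by lia; reflexivity.
Qed.

Lemma sumN_add f a b :
  sumN f (a + b) = sumN f a + sumN (fun t => f (a + t)%nat) b.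
Proof.
  induction b as [|b IH]; simpl.
  - rewrite Nat.add_0_r; ring.
  - rewrite Nat.add_succ_r; simpl; rewrite IH; ring.
Qed.

Lemma sumN_scal c f n : sumN (fun k => c * f k) n = c * sumN f n.
Proof. induction n as [|n IH]; simpl; [ring | rewrite IH; ring]. Qed.

Lemma sumN_minus f g n : sumN (fun k => f k - g k) n = sumN f n - sumN g n.
Proof. induction n as [|n IH]; simpl; [ring | rewrite IH; ring]. Qed.

Lemma sumN_const c n : sumN (fun _ => c) n = INR n * c.
Proof. induction n as [|n IH]; simpl sumN; [simpl; ring | rewrite IH, S_INR; ring]. Qed.

Lemma sumN_le f g n :
  (forall k, (k < n)%nat -> f k <= g k) -> sumN f n <= sumN g n.
Proof.
  induction n as [|n IH]; intros H; simpl; [lra|].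
  assert (sumN f n <= sumN g n) by (apply IH; intros; apply H; lia).
  assert (f n <= g n) by (apply H; lia). lra.
Qed.

Lemma sumN_abs f n : Rabs (sumN f n) <= sumN (fun k => Rabs (f k)) n.
Proof.
  induction n as [|n IH]; simpl; [rewrite Rabs_R0; lra|].
  eapply Rle_trans; [apply Rabs_triang | lra].
Qed.

Lemma sumN_zero f n : (forall k, (k < n)%nat -> f k = 0) -> sumN f n = 0.
Proof. intros H. rewrite (sumN_ext f (fun _ => 0)) by auto. rewrite sumN_const; ring. Qed.

Lemma sumN_extend_bounds f m n :
  (forall k, 0 <= f k <= 1) -> (m <= n)%nat ->
  0 <= sumN f n - sumN f m <= INR (n - m).
Proof.
  intros Hf Hmn.
  assert (Hsplit : sumN f n = sumN f m + sumN (fun t => f (m + t)%nat) (n - m)).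
  { rewrite <- sumN_add. f_equal. lia. }
  assert (Hlow : sumN (fun _ => 0) (n - m) <= sumN (fun t => f (m + t)%nat) (n - m))
    by (apply sumN_le; intros; apply Hf).
  assert (Hup : sumN (fun t => f (m + t)%nat) (n - m) <= sumN (fun _ => 1) (n - m))
    by (apply sumN_le; intros; apply Hf).
  rewrite !sumN_const in Hlow, Hup. lra.
Qed.

Lemma sumN_blocks g q m : (0 < q)%nat ->
  sumN (fun w => g (w / q)%nat) (m * q) = INR q * sumN g m.
Proof.
  intros Hq. induction m as [|m IH]; [simpl; ring|].
  rewrite Nat.mul_succ_l, sumN_add, IH. simpl sumN.
  rewrite (sumN_ext (fun t => g ((m * q + t) / q)%nat) (fun _ => g m)), sumN_const;
    [ring|].
  intros t Ht. rewrite Nat.div_add_l, Nat.div_small, Nat.add_0_r by lia.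
  reflexivity.
Qed.

Lemma sumN_one_block f q c n : (0 < q)%nat ->
  (forall w, 0 <= f w <= 1) -> (forall w, (w / q)%nat <> c -> f w = 0) ->
  sumN f n <= INR q.
Proof.
  intros Hq Hf Hsupp.
  assert (Hbefore : sumN f (c * q) = 0).
  { apply sumN_zero; intros w Hw; apply Hsupp.
    enough ((w / q < c)%nat) by lia. apply Nat.Div0.div_lt_upper_bound; lia. }
  assert (Hafter : sumN f (c * q + q + n) = sumN f (c * q + q)).
  { rewrite sumN_add, (sumN_zero (fun t => f (c * q + q + t)%nat)); [ring|].
    intros t _; apply Hsupp.
    replace (c * q + q + t)%nat with (t + (c + 1) * q)%nat by lia.
    rewrite Nat.div_add by lia. lia. }
  pose proof (sumN_extend_bounds f n (c * q + q + n) Hf ltac:(lia)).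
  pose proof (sumN_extend_bounds f (c * q) (c * q + q) Hf ltac:(lia)).
  replace (c * q + q - c * q)%nat with q in * by lia.
  lra.
Qed.

Lemma Rabs_prod_diff x1 y1 x2 y2 :
  0 <= y1 <= 1 -> 0 <= x2 <= 1 ->
  Rabs (x1 * y1 - x2 * y2) <= Rabs (x1 - x2) + Rabs (y1 - y2).
Proof.
  intros Hy1 Hx2.
  replace (x1 * y1 - x2 * y2) with ((x1 - x2) * y1 + x2 * (y1 - y2)) by ring.
  eapply Rle_trans; [apply Rabs_triang|]. rewrite !Rabs_mult.
  rewrite (Rabs_right y1), (Rabs_right x2) by lra.
  pose proof (Rabs_pos (x1 - x2)). pose proof (Rabs_pos (y1 - y2)). nra.
Qed.

Lemma exp_monotone x y : x <= y -> exp x <= exp y.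
Proof. intros [H|H]; [left; apply exp_increasing; auto | subst; lra]. Qed.

(* The fuel-indexed recursion does not depend on the fuel once it is at least
   i + j; this is what makes Dnode satisfy the defining equations. *)
Lemma D_fuel_stable p : forall n f g i j, (f <= n)%nat -> (g <= n)%nat ->
  (i + j <= f)%nat -> (i + j <= g)%nat -> D_fuel f p i j = D_fuel g p i j.
Proof.
  induction n as [|n IH]; intros f g i j Hf Hg Hif Hig.
  - replace f with 0%nat by lia. replace g with 0%nat by lia. reflexivity.
  - destruct f as [|f], g as [|g]; try (replace i with 0%nat by lia;
      replace j with 0%nat by lia; reflexivity).
    simpl. destruct (Nat.eqb i j); [reflexivity|].
    rewrite (sum_1_to_ext (fun k => D_fuel f p i k) (fun k => D_fuel g p i k)),
      (sum_1_to_ext (fun k => D_fuel f p j k) (fun k => D_fuel g p j k));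
      [reflexivity | |]; intros k Hk; apply IH; lia.
Qed.

Lemma Dnode_diag p i : Dnode p i i = 0.
Proof.
  unfold Dnode. destruct (i + i)%nat; simpl; [reflexivity|].
  now rewrite Nat.eqb_refl.
Qed.

Lemma Dnode_off p i j : i <> j -> Dnode p i j = p * Snode p i j * Snode p j i.
Proof.
  intros Hij. unfold Dnode, Snode. destruct (i + j)%nat as [|n] eqn:E; [lia|].
  simpl. apply Nat.eqb_neq in Hij. rewrite Hij.
  rewrite (sum_1_to_ext (fun k => D_fuel n p i k) (fun k => D_fuel (i + k) p i k)),
    (sum_1_to_ext (fun k => D_fuel n p j k) (fun k => D_fuel (j + k) p j k));
    [reflexivity | |]; intros k Hk; apply D_fuel_stable with (n := n); lia.
Qed.

Lemma Snode_succ p i j : (1 <= j)%nat ->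
  Snode p i (S j) = Snode p i j - Dnode p i j.
Proof.
  intros Hj. unfold Snode. replace (S j - 1)%nat with (S (j - 1)) by lia.
  simpl sum_1_to. replace (S (j - 1)) with j by lia. ring.
Qed.

(* For 0 <= p <= 1 the survival probabilities S_M(i,j) stay in [0,1]:
   each step multiplies S(i,j) by 1 - p S(j,i) in [0,1]. *)
Lemma Snode_bounds p i j : 0 <= p <= 1 -> 0 <= Snode p i j <= 1.
Proof.
  intros Hp. remember (i + j)%nat as n eqn:En. assert (Hn : (i + j <= n)%nat) by lia.
  clear En. revert i j Hn. induction n as [|n IH]; intros i j Hn;
    destruct j as [|[|j]]; try (unfold Snode; simpl; lra); [lia|].
  rewrite Snode_succ by lia.
  destruct (Nat.eq_dec i (S j)) as [->|Hij].
  - rewrite Dnode_diag. pose proof (IH (S j) (S j) ltac:(lia)). lra.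
  - rewrite Dnode_off by auto.
    pose proof (IH i (S j) ltac:(lia)). pose proof (IH (S j) i ltac:(lia)).
    set (x := Snode p i (S j)) in *. set (y := Snode p (S j) i) in *.
    assert (0 <= p * y <= 1) by nra.
    replace (x - p * x * y) with (x * (1 - p * y)) by ring. nra.
Qed.

(* Refinement of a coarse grid to a fine grid: the fine index u lies in the
   coarse cell u/q + 1, each coarse cell consisting of q fine indices. *)
Section FineGrid.

Variables (p : R) (q : nat).
Hypotheses (Hp : 0 <= p <= 1) (Hq : (0 < q)%nat).

Definition fineS (u v : nat) : R := Snode p (u / q + 1) (v / q + 1).

Lemma fineS_bounds u v : 0 <= fineS u v <= 1.
Proof. apply Snode_bounds, Hp. Qed.

Lemma fineS_block_sum u v :
  fineS u v = 1 - p / INR q *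
    sumN (fun w => if Nat.eq_dec (w / q) (u / q) then 0
                   else fineS u w * fineS w u) ((v / q) * q).
Proof.
  set (g := fun k : nat => if Nat.eq_dec k (u / q) then 0
                            else Snode p (u / q + 1) (k + 1) * Snode p (k + 1) (u / q + 1)).
  assert (Hqpos : 0 < INR q) by (apply lt_0_INR; lia).
  rewrite (sumN_ext _ (fun w => g (w / q)%nat)) by reflexivity.
  rewrite sumN_blocks by exact Hq.
  unfold fineS at 1, Snode. replace (v / q + 1 - 1)%nat with (v / q)%nat by lia.
  rewrite sum_1_to_sumN.
  rewrite (sumN_ext _ (fun k => p * g k)), sumN_scal.
  - field. lra.
  - intros k _. unfold g. replace (S k) with (k + 1)%nat by lia.
    destruct (Nat.eq_dec k (u / q)) as [->|Hk].
    + rewrite Dnode_diag. ring.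
    + rewrite Dnode_off by lia. ring.
Qed.

(* Fine-grid equation: up to an error R of at most 2q terms (the diagonal
   cell and the incomplete last cell), sigma(u,v) = 1 - (p/q) sum_{w<v}
   sigma(u,w) sigma(w,u). *)
Lemma fineS_equation u v : exists R, 0 <= R <= 2 * INR q /\
  fineS u v = 1 - p / INR q * (sumN (fun w => fineS u w * fineS w u) v - R).
Proof.
  set (m := ((v / q) * q)%nat).
  set (rho := fun w => fineS u w * fineS w u).
  set (tau := fun w => if Nat.eq_dec (w / q) (u / q) then 0 else rho w).
  assert (Hrho : forall w, 0 <= rho w <= 1).
  { intros w. pose proof (fineS_bounds u w). pose proof (fineS_bounds w u).
    unfold rho. nra. }
  assert (Hdiag : forall w, 0 <= rho w - tau w <= 1).
  { intros w. unfold tau. specialize (Hrho w).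
    destruct (Nat.eq_dec (w / q) (u / q)); lra. }
  assert (Hm : (m <= v < m + q)%nat).
  { unfold m. pose proof (Nat.div_mod_eq v q).
    pose proof (Nat.mod_upper_bound v q ltac:(lia)). lia. }
  assert (Hcell : 0 <= sumN (fun w => rho w - tau w) m <= INR q).
  { split.
    - rewrite <- (Rmult_0_r (INR m)), <- sumN_const. apply sumN_le; intros; apply Hdiag.
    - apply (sumN_one_block _ q (u / q)); [exact Hq | exact Hdiag |].
      intros w Hw. unfold tau. destruct (Nat.eq_dec (w / q) (u / q)); [lia | lra]. }
  assert (Hlast : 0 <= sumN rho v - sumN rho m <= INR q).
  { pose proof (sumN_extend_bounds rho m v Hrho ltac:(lia)).
    assert (INR (v - m) <= INR q) by (apply le_INR; lia). lra. }
  exists (sumN rho v - sumN tau m). rewrite sumN_minus in Hcell. split; [lra|].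
  rewrite fineS_block_sum. fold m. unfold tau, rho. ring.
Qed.

End FineGrid.

Definition fine_gap (p1 : R) (q1 : nat) (p2 : R) (q2 : nat) (u v : nat) : R :=
  Rabs (fineS p1 q1 u v - fineS p2 q2 u v).

(* Subtracting the two fine-grid equations yields a discrete integral
   inequality for the gap, with a source term from the two errors. *)
Lemma fine_gap_recursion p1 q1 p2 q2 u v :
  0 <= p1 <= 1 -> 0 <= p2 <= 1 -> (0 < q1)%nat -> (0 < q2)%nat ->
  p1 / INR q1 = p2 / INR q2 ->
  fine_gap p1 q1 p2 q2 u v <=
    p1 / INR q1 * sumN (fun w => fine_gap p1 q1 p2 q2 u w + fine_gap p1 q1 p2 q2 w u) v
    + 2 * (p1 / INR q1) * (INR q1 + INR q2).
Proof.
  intros Hp1 Hp2 Hq1 Hq2 Hstep.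
  set (k := p1 / INR q1) in *.
  assert (Hk : 0 <= k) by (apply Rmult_le_pos; [lra | left; apply Rinv_0_lt_compat, lt_0_INR; lia]).
  set (rho1 := fun w => fineS p1 q1 u w * fineS p1 q1 w u).
  set (rho2 := fun w => fineS p2 q2 u w * fineS p2 q2 w u).
  destruct (fineS_equation p1 q1 Hp1 Hq1 u v) as [R1 [HR1 E1]].
  destruct (fineS_equation p2 q2 Hp2 Hq2 u v) as [R2 [HR2 E2]].
  fold rho1 in E1. fold rho2 in E2. rewrite <- Hstep in E2. fold k in E1, E2.
  assert (Hterm : forall w, Rabs (rho2 w - rho1 w) <=
            fine_gap p1 q1 p2 q2 u w + fine_gap p1 q1 p2 q2 w u).
  { intros w. unfold rho1, rho2, fine_gap. rewrite Rabs_minus_sym.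
    apply Rabs_prod_diff; apply fineS_bounds; assumption. }
  assert (Hsum : Rabs (sumN (fun w => rho2 w - rho1 w) v) <=
            sumN (fun w => fine_gap p1 q1 p2 q2 u w + fine_gap p1 q1 p2 q2 w u) v).
  { eapply Rle_trans; [apply sumN_abs | apply sumN_le; intros; apply Hterm]. }
  assert (Herr : Rabs (R1 - R2) <= 2 * (INR q1 + INR q2)) by (apply Rabs_le; lra).
  unfold fine_gap at 1. rewrite E1, E2.
  replace (1 - k * (sumN rho1 v - R1) - (1 - k * (sumN rho2 v - R2)))
    with (k * (sumN (fun w => rho2 w - rho1 w) v + (R1 - R2)))
    by (rewrite sumN_minus; ring).
  rewrite Rabs_mult, (Rabs_right k) by lra.
  pose proof (Rabs_triang (sumN (fun w => rho2 w - rho1 w) v) (R1 - R2)).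
  apply Rmult_le_compat_l with (r := k) in Herr; [|exact Hk].
  apply Rmult_le_compat_l with (r := k) in Hsum; [|exact Hk].
  nra.
Qed.

Lemma geometric_exp_sum a v : 0 <= a ->
  a * sumN (fun w => exp (a * INR w)) v <= exp (a * INR v) - 1.
Proof.
  intros Ha. induction v as [|v IH].
  - simpl. rewrite Rmult_0_r, exp_0. lra.
  - simpl sumN. rewrite S_INR.
    replace (a * (INR v + 1)) with (a * INR v + a) by ring. rewrite exp_plus.
    pose proof (exp_ineq1_le a). pose proof (exp_pos (a * INR v)). nra.
Qed.

Section DiscreteGronwall.

Variables (e : nat -> nat -> R) (k c : R).
Hypotheses (Hk : 0 <= k) (Hc : 0 <= c).
Hypothesis Hrec : forall u v, e u v <= k * sumN (fun w => e u w + e w u) v + c.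

Lemma discrete_gronwall u v : e u v <= c * exp (2 * k * INR (u + v)).
Proof.
  set (a := 2 * k). assert (Ha : 0 <= a) by (unfold a; lra).
  enough (H : forall n u v, (u + v < n)%nat -> e u v <= c * exp (a * INR (u + v)))
    by (apply (H (S (u + v))); lia).
  induction n as [|n IH]; intros x y Hxy; [lia|].
  assert (Hsum : sumN (fun w => e x w + e w x) y <=
                 2 * c * exp (a * INR x) * sumN (fun w => exp (a * INR w)) y).
  { rewrite <- sumN_scal. apply sumN_le. intros w Hw.
    pose proof (IH x w ltac:(lia)) as Hxw. pose proof (IH w x ltac:(lia)) as Hwx.
    rewrite Nat.add_comm in Hwx.
    rewrite plus_INR, Rmult_plus_distr_l, exp_plus in Hxw, Hwx. lra. }
  pose proof (geometric_exp_sum a y Ha) as Hgeom.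
  pose proof (exp_ineq1_le (a * INR x)). pose proof (pos_INR x).
  assert (Hx1 : 1 <= exp (a * INR x)) by nra.
  assert (Hsum' : k * sumN (fun w => e x w + e w x) y <=
                  c * exp (a * INR x) * (exp (a * INR y) - 1)).
  { apply Rmult_le_compat_l with (r := k) in Hsum; [|exact Hk].
    eapply Rle_trans; [exact Hsum|].
    replace (k * (2 * c * exp (a * INR x) * sumN (fun w => exp (a * INR w)) y))
      with (c * exp (a * INR x) * (a * sumN (fun w => exp (a * INR w)) y))
      by (unfold a; ring).
    apply Rmult_le_compat_l; [nra | exact Hgeom]. }
  rewrite plus_INR, Rmult_plus_distr_l, exp_plus.
  pose proof (Hrec x y). nra.
Qed.

End DiscreteGronwall.

Lemma fine_gap_bound p1 q1 p2 q2 u v :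
  0 <= p1 <= 1 -> 0 <= p2 <= 1 -> (0 < q1)%nat -> (0 < q2)%nat ->
  p1 / INR q1 = p2 / INR q2 ->
  fine_gap p1 q1 p2 q2 u v <=
    2 * (p1 / INR q1) * (INR q1 + INR q2) * exp (2 * (p1 / INR q1) * INR (u + v)).
Proof.
  intros Hp1 Hp2 Hq1 Hq2 Hstep.
  assert (0 < INR q1) by (apply lt_0_INR; lia).
  assert (0 < INR q2) by (apply lt_0_INR; lia).
  assert (0 <= p1 / INR q1) by (apply Rmult_le_pos; [lra | left; apply Rinv_0_lt_compat; lra]).
  apply discrete_gronwall; [lra | nra |].
  intros x y. now apply fine_gap_recursion.
Qed.

Definition fine_index (L : nat) (x : R) : nat := Z.to_nat (floorZ (INR L * x)).

Lemma fine_index_spec L x : 0 <= INR L * x ->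
  INR (fine_index L x) <= INR L * x < INR (fine_index L x) + 1.
Proof.
  intros Hx. destruct (base_Int_part (INR L * x)) as [B1 B2].
  assert (Hnn : (0 <= floorZ (INR L * x))%Z).
  { enough ((-1 < floorZ (INR L * x))%Z) by lia. apply lt_IZR. simpl. unfold floorZ. lra. }
  unfold fine_index. rewrite INR_IZR_INZ, Z2Nat.id by exact Hnn.
  unfold floorZ. lra.
Qed.

Lemma fine_index_le L x : 0 <= x < 1 -> INR (fine_index L x) <= INR L.
Proof.
  intros Hx. pose proof (pos_INR L).
  pose proof (fine_index_spec L x ltac:(nra)). nra.
Qed.

(* Coarse cells are unions of fine cells: floor(M x) = floor(M q x) / q. *)
Lemma floor_refine M q x : (0 < M)%nat -> (0 < q)%nat -> 0 <= x ->
  floorZ (INR M * x) = Z.of_nat (fine_index (M * q) x / q).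
Proof.
  intros HM Hq Hx.
  assert (HMp : 0 < INR M) by (apply lt_0_INR; lia).
  assert (Hqp : 0 < INR q) by (apply lt_0_INR; lia).
  pose proof (fine_index_spec (M * q) x) as Hu. rewrite mult_INR in Hu.
  specialize (Hu ltac:(apply Rmult_le_pos; nra)).
  set (u := fine_index (M * q) x) in *.
  pose proof (Nat.div_mod_eq u q). pose proof (Nat.mod_upper_bound u q ltac:(lia)).
  set (c := (u / q)%nat) in *.
  assert (Hc1 : INR c * INR q <= INR u) by (rewrite <- mult_INR; apply le_INR; nia).
  assert (Hc2 : INR u + 1 <= (INR c + 1) * INR q).
  { rewrite <- S_INR, <- S_INR, <- mult_INR. apply le_INR. nia. }
  symmetry. apply Int_part_spec. rewrite <- INR_IZR_INZ. split.
  - apply (Rmult_lt_reg_r (INR q)); nra.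
  - apply (Rmult_le_reg_r (INR q)); nra.
Qed.

(* The scaled function is d times the product sigma(u,v) sigma(v,u) on any
   refinement of the grid of size M; the diagonal case is the block u/q = v/q. *)
Lemma Dscaled_fine d M q x y : (0 < M)%nat -> (0 < q)%nat -> 0 <= x -> 0 <= y ->
  Dscaled d M x y =
    d * fineS (d / INR M) q (fine_index (M * q) x) (fine_index (M * q) y)
      * fineS (d / INR M) q (fine_index (M * q) y) (fine_index (M * q) x).
Proof.
  intros HM Hq Hx Hy.
  assert (HMp : 0 < INR M) by (apply lt_0_INR; lia).
  unfold Dscaled, iM, fineS. rewrite (floor_refine M q x), (floor_refine M q y) by assumption.
  rewrite !Nat2Z.id.
  destruct (Z.eq_dec _ _) as [E|E].
  - apply Nat2Z.inj in E. rewrite E. field. lra.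
  - rewrite Dnode_off by (intros F; apply E; f_equal; lia). field. lra.
Qed.

Lemma edge_probability_bounds d M : 0 < d -> d < INR M -> 0 <= d / INR M <= 1.
Proof.
  intros Hd HM. split.
  - apply Rlt_le, Rdiv_lt_0_compat; lra.
  - apply (Rmult_le_reg_r (INR M)); [lra|]. field_simplify; lra.
Qed.

Lemma refined_gap_estimate d N N1 N2 u v : 0 < d -> (0 < N)%nat ->
  (N <= N1)%nat -> (N <= N2)%nat ->
  INR u <= INR (N1 * N2) -> INR v <= INR (N1 * N2) ->
  2 * (d / INR N1 / INR N2) * (INR N2 + INR N1)
    * exp (2 * (d / INR N1 / INR N2) * INR (u + v)) <= 4 * d / INR N * exp (8 * d).
Proof.
  intros Hd HN HN1 HN2 Hu Hv. rewrite mult_INR in Hu, Hv.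
  assert (0 < INR N) by (apply lt_0_INR; lia).
  assert (INR N <= INR N1) by (apply le_INR; lia).
  assert (INR N <= INR N2) by (apply le_INR; lia).
  assert (Hsource : 2 * (d / INR N1 / INR N2) * (INR N2 + INR N1) <= 4 * d / INR N).
  { replace (2 * (d / INR N1 / INR N2) * (INR N2 + INR N1))
      with (2 * d / INR N1 + 2 * d / INR N2) by (field; lra).
    replace (4 * d / INR N) with (2 * d / INR N + 2 * d / INR N) by (field; lra).
    apply Rplus_le_compat; apply Rmult_le_compat_l;
      try apply Rinv_le_contravar; lra. }
  assert (Hrate : 2 * (d / INR N1 / INR N2) * INR (u + v) <= 8 * d).
  { rewrite plus_INR. apply (Rmult_le_reg_r (INR N1 * INR N2)); [nra|].
    replace (2 * (d / INR N1 / INR N2) * (INR u + INR v) * (INR N1 * INR N2))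
      with (2 * d * (INR u + INR v)) by (field; lra).
    assert (0 <= INR N1 * INR N2) by nra. nra. }
  apply Rmult_le_compat; [| apply Rlt_le, exp_pos | exact Hsource | now apply exp_monotone].
  apply Rmult_le_pos; [| pose proof (pos_INR N1); pose proof (pos_INR N2); lra].
  apply Rmult_le_pos; [lra|]. apply Rlt_le. repeat apply Rdiv_lt_0_compat; lra.
Qed.

Theorem mainTheorem2 :
  forall (d : R), 0 < d ->
  forall (N : nat), d < INR N ->
  forall (N1 N2 : nat), (N <= N1)%nat -> (N <= N2)%nat ->
  forall (alpha beta : R),
    0 <= alpha < 1 -> 0 <= beta < 1 ->
    Rabs (Dscaled d N1 alpha beta - Dscaled d N2 alpha beta)
      <= 16 * d ^ 2 / INR N * exp (8 * d).
Proof.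
  intros d Hd N HN N1 N2 HN1 HN2 alpha beta Halpha Hbeta.
  assert (HN0 : (0 < N)%nat) by (destruct N; [simpl in HN; lra | lia]).
  assert (HN1r : d < INR N1) by (apply Rlt_le_trans with (INR N); [|apply le_INR]; auto).
  assert (HN2r : d < INR N2) by (apply Rlt_le_trans with (INR N); [|apply le_INR]; auto).
  pose proof (edge_probability_bounds d N1 Hd HN1r) as Hp1.
  pose proof (edge_probability_bounds d N2 Hd HN2r) as Hp2.
  (* Common refinement of both grids to size L = N1 N2. *)
  rewrite (Dscaled_fine d N1 N2), (Dscaled_fine d N2 N1), (Nat.mul_comm N2 N1) by (lia || lra).
  set (L := (N1 * N2)%nat).
  set (u := fine_index L alpha). set (v := fine_index L beta).
  pose proof (fine_index_le L alpha Halpha) as Hu.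
  pose proof (fine_index_le L beta Hbeta) as Hv.
  assert (Hstep : d / INR N1 / INR N2 = d / INR N2 / INR N1) by (field; lra).
  pose proof (fine_gap_bound _ N2 _ N1 u v Hp1 Hp2 ltac:(lia) ltac:(lia) Hstep) as Guv.
  pose proof (fine_gap_bound _ N2 _ N1 v u Hp1 Hp2 ltac:(lia) ltac:(lia) Hstep) as Gvu.
  pose proof (refined_gap_estimate d N N1 N2 u v Hd HN0 HN1 HN2 Hu Hv) as Euv.
  pose proof (refined_gap_estimate d N N1 N2 v u Hd HN0 HN1 HN2 Hv Hu) as Evu.
  unfold fine_gap in Guv, Gvu.
  (* |D1 - D2| = d |sigma1 sigma1' - sigma2 sigma2'| <= d (gap(u,v) + gap(v,u)). *)
  pose proof (Rabs_prod_diff (fineS (d / INR N1) N2 u v) (fineS (d / INR N1) N2 v u)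
    (fineS (d / INR N2) N1 u v) (fineS (d / INR N2) N1 v u)
    (fineS_bounds _ _ Hp1 v u) (fineS_bounds _ _ Hp2 u v)) as Hprod.
  rewrite !Rmult_assoc, <- Rmult_minus_distr_l, Rabs_mult, (Rabs_right d) by lra.
  assert (0 <= 4 * d / INR N * exp (8 * d)).
  { apply Rmult_le_pos; [apply Rlt_le, Rdiv_lt_0_compat; lra | apply Rlt_le, exp_pos]. }
  replace (16 * d ^ 2 / INR N * exp (8 * d)) with (d * (4 * (4 * d / INR N * exp (8 * d))))
    by (field; lra).
  apply Rmult_le_compat_l; lra.
Qed.
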